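(* Let $k\ge2$, $n\ge0$, $T\in\mathcal{T}^k_n$ and $\pi=\phi(T)$. Then $\operatorname{asc}(\pi)=\operatorname{casc}(T)$, $\operatorname{des}(\pi)=\operatorname{cdes}(T)$ and $\operatorname{plat}(\pi)=\operatorname{emp}(T)$.
   Context: For $k\ge2$, $\mathcal{T}^k_n$ is the set of plane rooted trees with $n$ edges labeled bijectively by $\{1,\dots,n\}$, in which every non-root vertex has $k-2$ unlabeled half-edges separating its children into $k-1$ ordered, possibly empty, compartments (the root has no half-edges). For a non-root vertex $c$ with parent-edge label $\ell$, set $W(c)=\ell\,U_1\,\ell\,U_2\,\ell\cdots\ell\,U_{k-1}\,\ell$, where $U_j$ is the concatenation of $W(c')$ over the children $c'$ in the $j$-th compartment of $c$, left to right; $\phi(T)$ is the concatenation of $W(c)$ over the root's children, left to right. For a sequence $\pi_1\cdots\pi_r$: $i\in\{1,\dots,r\}$ is a descent if $\pi_i>\pi_{i+1}$ or $i=r$; $i\in\{0,\dots,r-1\}$ is an ascent if $i=0$ or $\pi_i<\pi_{i+1}$; $i\in\{1,\dots,r-1\}$ is a plateau if $\pi_i=\pi_{i+1}$; $\operatorname{des},\operatorname{asc},\operatorname{plat}$ count these. Cyclic counts: $\operatorname{cdes}(\pi)=|\{i\in\{1,\dots,r\}:\pi_i>\pi_{i+1}\}|$ and $\operatorname{casc}(\pi)=|\{i\in\{1,\dots,r\}:\pi_i<\pi_{i+1}\}|$, with $\pi_{r+1}=\pi_1$. For a non-root vertex $v$ with parent-edge label $\ell$ and children-edge labels $a_{j,1},\dots,a_{j,d_j}$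 (left to right) in compartment $j$, set $\operatorname{cdes}(v)=\operatorname{cdes}(\ell a_{1,1}\cdots a_{1,d_1}\ell a_{2,1}\cdots a_{2,d_2}\ell\cdots\ell a_{k-1,1}\cdots a_{k-1,d_{k-1}})$ and $\operatorname{casc}(v)$ likewise with $\operatorname{casc}$. For the root with children-edge labels $a_1,\dots,a_d$ left to right, $\operatorname{cdes}(v)=\operatorname{des}(a_1\cdots a_d)$ and $\operatorname{casc}(v)=\operatorname{asc}(a_1\cdots a_d)$. Then $\operatorname{cdes}(T)=\sum_v\operatorname{cdes}(v)$, $\operatorname{casc}(T)=\sum_v\operatorname{casc}(v)$, and $\operatorname{emp}(T)$ is the total number of empty compartments over all non-root vertices. *)

From mathcomp Require Import all_boot.
Set Implicit Arguments. Unset Strict Implicit. Unset Printing Implicit Defensive.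

(* A non-root vertex: the label of its parent edge, and its list of
   compartments (ordered), each compartment being the ordered list of the
   children (subtrees) it contains.  The k-2 half-edges separate the children
   into k-1 compartments, so a well-formed vertex has exactly k-1 compartments. *)
Inductive vtx : Type := Node of nat & seq (seq vtx).

Definition vlabel (v : vtx) : nat := let: Node l _ := v in l.

(* A plane rooted tree: the ordered list of the root's children subtrees. *)
Definition tree := seq vtx.

Fixpoint wfk (k : nat) (v : vtx) : bool :=
  let: Node _ cs := v in
  (size cs == k.-1) && all (fun U => all (wfk k) U) cs.

Fixpoint labels (v : vtx) : seq nat :=
  let: Node l cs := v in l :: flatten (map (fun U => flatten (map labels U)) cs).

Definition in_Tkn (k n : nat) (T : tree) : bool :=
  all (wfk k) T && perm_eq (flatten (map labels T)) (iota 1 n).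

Fixpoint W (v : vtx) : seq nat :=
  let: Node l cs := v in
  l :: flatten (map (fun U => flatten (map W U) ++ [:: l]) cs).

Definition phi (T : tree) : seq nat := flatten (map W T).

Definition cpairs (s : seq nat) : seq (nat * nat) := zip s (behead s).
Definition cycpairs (s : seq nat) : seq (nat * nat) := zip s (rot 1 s).

(* des: i in {1..r} with pi_i > pi_{i+1} or i = r *)
Definition des (s : seq nat) : nat :=
  count (fun p => p.1 > p.2) (cpairs s) + (size s > 0).
(* asc: i in {0..r-1} with i = 0 or pi_i < pi_{i+1} *)
Definition asc (s : seq nat) : nat :=
  (size s > 0) + count (fun p => p.1 < p.2) (cpairs s).
Definition plat (s : seq nat) : nat :=
  count (fun p => p.1 == p.2) (cpairs s).

Definition cdes (s : seq nat) : nat := count (fun p => p.1 > p.2) (cycpairs s).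
Definition casc (s : seq nat) : nat := count (fun p => p.1 < p.2) (cycpairs s).

Definition vword (v : vtx) : seq nat :=
  let: Node l cs := v in flatten (map (fun U => l :: map vlabel U) cs).

Fixpoint cdes_v (v : vtx) : nat :=
  let: Node _ cs := v in
  cdes (vword v) + sumn (map (fun U => sumn (map cdes_v U)) cs).

Fixpoint casc_v (v : vtx) : nat :=
  let: Node _ cs := v in
  casc (vword v) + sumn (map (fun U => sumn (map casc_v U)) cs).

Fixpoint emp_v (v : vtx) : nat :=
  let: Node _ cs := v in
  count (fun U : seq vtx => nilp U) cs + sumn (map (fun U => sumn (map emp_v U)) cs).

Definition cdesT (T : tree) : nat := des (map vlabel T) + sumn (map cdes_v T).
Definition cascT (T : tree) : nat := asc (map vlabel T) + sumn (map casc_v T).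
Definition empT (T : tree) : nat := sumn (map emp_v T).

(* Every block W(c) starts and ends with the label of c.  For a concatenation
   of such closed blocks, the statistics of adjacent pairs add up over the
   blocks, plus the statistic of the word of their first letters.  Cutting
   W(c) into the blocks [l], W(c') for the children c' of each compartment,
   and [l] after each compartment, that word of first letters is the vertex
   word of c closed up by l, whose pairs are its cyclic pairs.  Hence the
   ascents, descents and plateaux of W(c) are the cyclic ones summed over the
   subtree of c, and the root contributes those of its children's labels.
   Since labels are distinct, the only plateaux of a closed vertex word are
   l l, one per empty compartment.  Neither k nor the number of compartments
   plays any role. *)

From mathcomp Require Import all_boot.
From mathcomp Require Import zify.

Lemma cpairs_cat x s y t :
  cpairs (x :: s ++ y :: t) = cpairs (x :: s) ++ (last x s, y) :: cpairs (y :: t).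
Proof. by elim: s x => [|z s IH] x //=; rewrite -[RHS]/((x, z) :: _) -IH. Qed.

Lemma cycpairs_rcons x w : cycpairs w = cpairs (rcons w (head x w)).
Proof.
have zip_rconsl (s t : seq nat) a : size s = size t -> zip (rcons s a) t = zip s t.
  by elim: s t => [|b s IH] [|c t] //= [/IH ->].
case: w => [|y w] //; rewrite /cycpairs /cpairs rot1_cons /= -rcons_cons.
by rewrite zip_rconsl // size_rcons.
Qed.

Lemma plat_uniq s : uniq s -> plat s = 0.
Proof.
elim: s => [|x [|y s] IH] // /andP [x_notin /IH]; rewrite /plat /= => ->.
by move: x_notin; rewrite inE negb_or => /andP [/negbTE ->].
Qed.

Lemma plat_cat x s y t :
  plat (x :: s ++ y :: t) = plat (x :: s) + (last x s == y) + plat (y :: t).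
Proof. by rewrite /plat cpairs_cat count_cat /= addnA. Qed.

Lemma plat_rcons_blocks l ss : uniq (l :: flatten ss) ->
  plat (l :: flatten [seq rcons s l | s <- ss]) = count (@nilp nat) ss.
Proof.
elim: ss => // s ss IH; rewrite map_cons [flatten (s :: _)]/= [flatten (rcons _ _ :: _)]/=.
rewrite cons_uniq mem_cat negb_or cat_uniq.
move=> /andP [/andP [l_notin_s l_notin_ss] /and3P [uniq_s _ uniq_ss]].
rewrite -cats1 -catA plat_cat IH ?cons_uniq ?l_notin_ss //.
rewrite plat_uniq ?cons_uniq ?l_notin_s //= add0n; congr (_ + _).
case: s l_notin_s {uniq_s} => [|y t] /= l_notin; first by rewrite eqxx.
suff /negbTE -> : last y t != l by [].
by apply: contraNneq l_notin => <-; apply: mem_last.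
Qed.

Lemma sumn_map_flatten (T : Type) (f : T -> nat) ss :
  sumn (map f (flatten ss)) = sumn [seq sumn (map f s) | s <- ss].
Proof. by rewrite map_flatten sumn_flatten -map_comp. Qed.

Lemma flatten_map_flatten (A B : Type) (g : A -> seq (seq B)) s :
  flatten [seq flatten (g x) | x <- s] = flatten (flatten (map g s)).
Proof.
by elim: s => // x s IH; rewrite map_cons [LHS]/= IH map_cons [in RHS]/= flatten_cat.
Qed.

Definition is_loop (w : seq nat) := (w != [::]) && (head 0 w == last 0 w).

Lemma vtx_ind (P : vtx -> Prop) :
  (forall l cs, List.Forall P (flatten cs) -> P (Node l cs)) -> forall v, P v.
Proof.
move=> IH; exact: (fix F v := let: Node l cs := v in IH l cs
  ((fix G cs : List.Forall P (flatten cs) :=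
      if cs is U :: cs' then
        (fix H U : List.Forall P (U ++ flatten cs') :=
           if U is c :: U' then List.Forall_cons c (F c) (H U') else G cs') U
      else List.Forall_nil P) cs)).
Qed.

Lemma head_W v : head 0 (W v) = vlabel v.
Proof. by case: v. Qed.

Lemma W_loop v : is_loop (W v).
Proof.
case: v => l cs; rewrite /is_loop /=; apply/eqP.
by elim: cs => //= U cs IH; rewrite !last_cat /= -IH.
Qed.

Lemma W_blocks l cs :
  W (Node l cs) = flatten ([:: l] :: flatten [seq rcons (map W U) [:: l] | U <- cs]).
Proof.
have -> : W (Node l cs) = l :: flatten [seq flatten (map W U) ++ [:: l] | U <- cs] by [].
rewrite -[RHS]/(l :: flatten (flatten [seq rcons (map W U) [:: l] | U <- cs])).
congr (_ :: _); rewrite -flatten_map_flatten; congr flatten.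
by apply: eq_map => U; rewrite flatten_rcons.
Qed.

Lemma vword_rcons l cs :
  rcons (vword (Node l cs)) l = l :: flatten [seq rcons (map vlabel U) l | U <- cs].
Proof. by elim: cs => //= U cs IH; rewrite rcons_cat IH -cats1 -catA. Qed.

Lemma head_vword l cs : head l (vword (Node l cs)) = l.
Proof. by case: cs. Qed.

Lemma labels_Node l cs : labels (Node l cs) = l :: flatten (map labels (flatten cs)).
Proof. by rewrite map_flatten -flatten_map_flatten. Qed.

Lemma vlabels_subseq_labels F : subseq (map vlabel F) (flatten (map labels F)).
Proof.
elim: F => // [[l cs] F IH] /=; rewrite eqxx.
by rewrite -[map vlabel F]cat0s cat_subseq ?sub0seq.
Qed.

Section PairStatistics.

Variable P : pred (nat * nat).

Lemma count_cpairs_flatten_loops ws : all is_loop ws ->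
  count P (cpairs (flatten ws)) =
  sumn [seq count P (cpairs w) | w <- ws] + count P (cpairs (map (head 0) ws)).
Proof.
elim: ws => [|[|x s] ws IH] //= /andP [/andP [_ /eqP /= loop_xs] loop_ws].
case: ws IH loop_ws => [|[|y s'] ws] IH //=; first by rewrite cats0 !addn0.
move=> /[dup] /IH {}IH _; rewrite cpairs_cat count_cat /= -/(flatten _) IH.
rewrite -loop_xs /= -/(cpairs (y :: _)); lia.
Qed.

Lemma count_cpairs_W l cs :
  count P (cpairs (W (Node l cs))) =
  count P (cycpairs (vword (Node l cs))) +
  sumn [seq count P (cpairs (W c)) | c <- flatten cs].
Proof.
rewrite W_blocks count_cpairs_flatten_loops; last first.
  rewrite /= {1}/is_loop /= eqxx /=; elim: cs => // U cs IH.
  rewrite map_cons [flatten _]/= all_cat IH all_rcons andbT {1}/is_loop /= eqxx /=.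
  by elim: U => //= c U ->; rewrite W_loop.
rewrite (cycpairs_rcons l) head_vword vword_rcons addnC /= add0n.
congr (count P (cpairs (l :: _)) + _).
  rewrite map_flatten -map_comp; congr flatten; apply: eq_map => U /=.
  by rewrite map_rcons -map_comp (eq_map head_W).
rewrite !sumn_map_flatten -map_comp; congr sumn; apply: eq_map => U /=.
by rewrite map_rcons sumn_rcons addn0 -map_comp.
Qed.

Lemma count_cpairs_W_rec (f : vtx -> nat) :
  (forall l cs, f (Node l cs) =
     count P (cycpairs (vword (Node l cs))) + sumn (map f (flatten cs))) ->
  forall v, f v = count P (cpairs (W v)).
Proof.
move=> f_rec; apply: vtx_ind => l cs IH; rewrite f_rec count_cpairs_W.
by congr (_ + sumn _); elim: IH => //= c F -> _ ->.
Qed.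

Lemma count_cpairs_phi T :
  count P (cpairs (phi T)) =
  sumn [seq count P (cpairs (W c)) | c <- T] + count P (cpairs (map vlabel T)).
Proof.
rewrite count_cpairs_flatten_loops -?map_comp ?(eq_map head_W) //.
by elim: T => //= c T ->; rewrite W_loop.
Qed.

End PairStatistics.

Lemma casc_v_W v : casc_v v = count (fun p => p.1 < p.2) (cpairs (W v)).
Proof. by apply: count_cpairs_W_rec => l cs; rewrite sumn_map_flatten. Qed.

Lemma cdes_v_W v : cdes_v v = count (fun p => p.1 > p.2) (cpairs (W v)).
Proof. by apply: count_cpairs_W_rec => l cs; rewrite sumn_map_flatten. Qed.

Lemma emp_v_W v : uniq (labels v) -> emp_v v = plat (W v).
Proof.
elim/vtx_ind: v => l cs IH; rewrite labels_Node cons_uniq => /andP [l_notin uniq_F].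
rewrite /plat count_cpairs_W /= -sumn_map_flatten; congr (_ + _).
  rewrite (cycpairs_rcons l) head_vword vword_rcons -/(plat _).
  have -> : [seq rcons (map vlabel U) l | U <- cs] =
            [seq rcons s l | s <- map (map vlabel) cs] by rewrite -map_comp.
  rewrite plat_rcons_blocks ?count_map; last first.
    have vlabels_sub := vlabels_subseq_labels (flatten cs).
    rewrite -map_flatten cons_uniq (subseq_uniq vlabels_sub) // andbT.
    by move: l_notin; apply: contra => /(mem_subseq vlabels_sub).
  by elim: cs {IH l_notin uniq_F} => //= U cs ->; rewrite /nilp size_map.
elim: IH uniq_F => //= c F IHc _ IHF; rewrite cat_uniq => /and3P [uniq_c _ uniq_F].
by rewrite IHc // IHF.
Qed.

Theorem lemma4p5 (k n : nat) (T : tree) :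
  2 <= k -> in_Tkn k n T ->
  [/\ asc (phi T) = cascT T, des (phi T) = cdesT T & plat (phi T) = empT T].
Proof.
move=> _ /andP [_ labels_perm].
have uniq_labels : uniq (flatten (map labels T)).
  by rewrite (perm_uniq labels_perm) iota_uniq.
have size_phi : (0 < size (phi T)) = (0 < size (map vlabel T)).
  by case: T {labels_perm uniq_labels} => [|[]].
split.
- by rewrite /asc /cascT /asc size_phi count_cpairs_phi (eq_map casc_v_W); lia.
- by rewrite /des /cdesT /des size_phi count_cpairs_phi (eq_map cdes_v_W); lia.
rewrite {1}/plat count_cpairs_phi -/(plat _) plat_uniq ?addn0; last first.
  exact: subseq_uniq (vlabels_subseq_labels _) uniq_labels.
rewrite /empT; elim: T {labels_perm size_phi} uniq_labels => //= c T IH.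
by rewrite cat_uniq => /and3P [uniq_c _ uniq_T]; rewrite emp_v_W // IH.
Qed.
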